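(* Let $K=\langle g,\gamma\rangle$ be a non-trivial torsion-free group, and suppose that for every nonzero $n\in\mathbb{Z}$ we have $\gamma^n\notin\langle\langle g\rangle\rangle_K$. Then there is a finitely generated torsion-free group $\Gamma$ and a non-trivial element $a\in\Gamma$ such that: (1) $K$ embeds as a subgroup of $\Gamma$ (identify $g,\gamma$ with their images); (2) the commutator $[a,\gamma]$ is non-trivial and centralizes $g$; (3) $[a,g]=1$.
   Context: $\langle\langle g\rangle\rangle_K$ denotes the normal closure of $g$ in $K$; $[x,y]$ denotes the group commutator. *)

From Stdlib Require Import ZArith List.

Record Group := {
  carrier :> Type;
  gmul : carrier -> carrier -> carrier;
  gone : carrier;
  ginv : carrier -> carrier;
  gmul_assoc : forall x y z, gmul x (gmul y z) = gmul (gmul x y) z;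
  gmul_1l : forall x, gmul gone x = x;
  gmul_1r : forall x, gmul x gone = x;
  gmul_Vl : forall x, gmul (ginv x) x = gone;
  gmul_Vr : forall x, gmul x (ginv x) = gone
}.

Arguments gmul {g} _ _.
Arguments gone {g}.
Arguments ginv {g} _.

Fixpoint gpow {G : Group} (x : G) (n : nat) : G :=
  match n with O => gone | S m => gmul x (gpow x m) end.

Definition gzpow {G : Group} (x : G) (n : Z) : G :=
  match n with
  | Z0 => gone
  | Zpos p => gpow x (Pos.to_nat p)
  | Zneg p => ginv (gpow x (Pos.to_nat p))
  end.

Definition comm {G : Group} (x y : G) : G :=
  gmul (gmul (gmul (ginv x) (ginv y)) x) y.

Inductive gen {G : Group} (S : G -> Prop) : G -> Prop :=
  | gen_base : forall x, S x -> gen S x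
  | gen_one : gen S gone
  | gen_mul : forall x y, gen S x -> gen S y -> gen S (gmul x y)
  | gen_inv : forall x, gen S x -> gen S (ginv x).

Definition generated_by2 {G : Group} (g c : G) : Prop :=
  forall x : G, gen (fun y => y = g \/ y = c) x.

Definition normal_closure {G : Group} (g : G) : G -> Prop :=
  gen (fun y => exists h : G, y = gmul (gmul (ginv h) g) h).

Definition nontrivial (G : Group) : Prop := exists x : G, x <> gone.

Definition torsion_free (G : Group) : Prop :=
  forall (x : G) (n : nat), (0 < n)%nat -> gpow x n = gone -> x = gone.

Definition finitely_generated (G : Group) : Prop :=
  exists l : list G, forall x : G, gen (fun y => In y l) x.

Definition is_hom {G H : Group} (f : G -> H) : Prop :=
  forall x y : G, f (gmul x y) = gmul (f x) (f y).

Definition injective {A B : Type} (f : A -> B) : Prop :=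
  forall x y, f x = f y -> x = y.

From Stdlib Require Import ZArith List Lia ClassicalEpsilon.

(** Since K = <g, gam> and no nonzero power of gam lies in <<g>>, the quotient
    K / <<g>> is infinite cyclic on the image of gam; this gives a homomorphism
    f from K to the integral Heisenberg group H = <x, y> with f g = 1 and
    f gam = x.  Take Gam = K * H with K embedded as the graph of f, and
    a = (1, y).  Then [a, gam] = (1, [y, x]) is a non-trivial central element
    and a commutes with g = (g, 1). *)

Section GroupLaws.
Variable G : Group.
Implicit Types x y : G.

Lemma mulKg x y : gmul (ginv x) (gmul x y) = y.
Proof. rewrite gmul_assoc, gmul_Vl, gmul_1l. reflexivity. Qed.

Lemma mulKVg x y : gmul x (gmul (ginv x) y) = y.
Proof. rewrite gmul_assoc, gmul_Vr, gmul_1l. reflexivity. Qed.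

Lemma mulg_eq1_inv x y : gmul x y = gone -> ginv x = y.
Proof. intro E. rewrite <- (mulKg x y), E, gmul_1r. reflexivity. Qed.

Lemma invMg x y : ginv (gmul x y) = gmul (ginv y) (ginv x).
Proof. apply mulg_eq1_inv. rewrite <- gmul_assoc, mulKVg, gmul_Vr. reflexivity. Qed.

Lemma invgK x : ginv (ginv x) = x.
Proof. apply mulg_eq1_inv, gmul_Vl. Qed.

Lemma invg1 : ginv (@gone G) = gone.
Proof. apply mulg_eq1_inv, gmul_1l. Qed.

End GroupLaws.

Ltac gnorm := repeat progress (rewrite ?invMg, ?invgK, ?invg1, ?gmul_1l, ?gmul_1r,
   <- ?gmul_assoc, ?mulKg, ?mulKVg, ?gmul_Vl, ?gmul_Vr).

Lemma comm1g (G : Group) (x : G) : comm gone x = gone.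
Proof. unfold comm. gnorm. reflexivity. Qed.

Lemma commg1 (G : Group) (x : G) : comm x gone = gone.
Proof. unfold comm. gnorm. reflexivity. Qed.

Section Powers.
Variable G : Group.
Implicit Types x : G.

Lemma gpow_add x n m : gpow x (n + m) = gmul (gpow x n) (gpow x m).
Proof.
  induction n as [|n IH]; simpl.
  - rewrite gmul_1l. reflexivity.
  - rewrite IH, gmul_assoc. reflexivity.
Qed.

Lemma gpowSr x n : gpow x (S n) = gmul (gpow x n) x.
Proof. rewrite <- Nat.add_1_r, gpow_add. simpl. rewrite gmul_1r. reflexivity. Qed.

Lemma gzpow1 x : gzpow x 1 = x.
Proof. apply gmul_1r. Qed.

Lemma gzpow_succ x n : gzpow x (Z.succ n) = gmul x (gzpow x n).
Proof.
  destruct n as [|p|p].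
  - reflexivity.
  - replace (Z.succ (Zpos p)) with (Zpos (Pos.succ p)) by lia.
    simpl. rewrite Pos2Nat.inj_succ. reflexivity.
  - destruct p as [|q] using Pos.peano_case.
    + simpl. rewrite gmul_1r, gmul_Vr. reflexivity.
    + replace (Z.succ (Zneg (Pos.succ q))) with (Zneg q) by lia.
      simpl. rewrite Pos2Nat.inj_succ, gpowSr. gnorm. reflexivity.
Qed.

Lemma gzpow_pred x n : gzpow x (Z.pred n) = gmul (ginv x) (gzpow x n).
Proof. rewrite <- (Z.succ_pred n) at 2. rewrite gzpow_succ. gnorm. reflexivity. Qed.

Lemma gzpow_add x n m : gzpow x (n + m) = gmul (gzpow x n) (gzpow x m).
Proof.
  induction n as [|n IH|n IH] using Z.peano_ind.
  - simpl. rewrite gmul_1l. reflexivity.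
  - rewrite Z.add_succ_l, !gzpow_succ, IH, gmul_assoc. reflexivity.
  - rewrite Z.add_pred_l, !gzpow_pred, IH, gmul_assoc. reflexivity.
Qed.

Lemma gzpow_opp x n : gzpow x (- n) = ginv (gzpow x n).
Proof.
  symmetry. apply mulg_eq1_inv. rewrite <- gzpow_add, Z.add_opp_diag_r. reflexivity.
Qed.

Lemma gzpow_eq x (f : Z -> G) :
  f 0%Z = gone -> (forall n, f (Z.succ n) = gmul x (f n)) -> forall n, gzpow x n = f n.
Proof.
  intros f0 fS n. induction n as [|n IH|n IH] using Z.peano_ind.
  - symmetry. exact f0.
  - rewrite gzpow_succ, IH, fS. reflexivity.
  - rewrite gzpow_pred, IH, <- (Z.succ_pred n), fS, Z.pred_succ. gnorm. reflexivity.
Qed.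

End Powers.

Section Generation.
Variable G : Group.
Implicit Types (S : G -> Prop) (x y : G).

Lemma gen_eq S x y : gen S x -> x = y -> gen S y.
Proof. intros Hx <-. exact Hx. Qed.

Lemma gen_mono S T x : (forall y, S y -> T y) -> gen S x -> gen T x.
Proof.
  intros HST Hx. induction Hx.
  - apply gen_base; auto.
  - apply gen_one.
  - apply gen_mul; assumption.
  - apply gen_inv; assumption.
Qed.

Lemma gen_gpow S x n : gen S x -> gen S (gpow x n).
Proof.
  intro Hx. induction n as [|n IH].
  - apply gen_one.
  - apply gen_mul; assumption.
Qed.

Lemma gen_gzpow S x n : gen S x -> gen S (gzpow x n).
Proof.
  intro Hx. destruct n as [|p|p]; simpl.
  - apply gen_one.
  - apply gen_gpow, Hx.
  - apply gen_inv, gen_gpow, Hx.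
Qed.

Lemma gen_comm S x y : gen S x -> gen S y -> gen S (comm x y).
Proof. intros Hx Hy. unfold comm. repeat apply gen_mul; auto using gen_inv. Qed.

End Generation.

Section Homomorphisms.
Variables (G H : Group) (f : G -> H).
Hypothesis f_hom : is_hom f.

Lemma hom_one : f gone = gone.
Proof.
  assert (E : gmul (f gone) (f gone) = f gone) by (rewrite <- f_hom, gmul_1l; reflexivity).
  rewrite <- (mulKg H (f gone) (f gone)), E, gmul_Vl. reflexivity.
Qed.

Lemma hom_inv x : f (ginv x) = ginv (f x).
Proof. symmetry. apply mulg_eq1_inv. rewrite <- f_hom, gmul_Vr. exact hom_one. Qed.

Lemma gen_hom (S : G -> Prop) (T : H -> Prop) x :
  (forall y, S y -> T (f y)) -> gen S x -> gen T (f x).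
Proof.
  intros HST Hx. induction Hx as [y Sy| |y z _ IHy _ IHz|y _ IHy].
  - apply gen_base; auto.
  - rewrite hom_one. apply gen_one.
  - rewrite f_hom. apply gen_mul; assumption.
  - rewrite hom_inv. apply gen_inv; assumption.
Qed.

End Homomorphisms.

Lemma generated_by2_finitely_generated (G : Group) (x y : G) :
  generated_by2 x y -> finitely_generated G.
Proof.
  intro Hxy. exists (x :: y :: nil). intro z.
  eapply gen_mono; [| apply Hxy]. intros u [-> | ->]; simpl; auto.
Qed.

Section NormalClosure.
Variables (K : Group) (g : K).

Lemma normal_closure_conj u h :
  normal_closure g u -> normal_closure g (gmul (gmul (ginv h) u) h).
Proof.
  intro Hu. induction Hu as [u [k ->]| |u v _ IHu _ IHv|u _ IHu].
  - apply gen_base. exists (gmul k h). gnorm. reflexivity.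
  - eapply gen_eq; [apply gen_one|]. gnorm. reflexivity.
  - eapply gen_eq; [apply gen_mul; [exact IHu | exact IHv]|]. gnorm. reflexivity.
  - eapply gen_eq; [apply gen_inv, IHu|]. gnorm. reflexivity.
Qed.

Definition ncl_congr (x y : K) : Prop := normal_closure g (gmul (ginv y) x).

Lemma ncl_congr_refl x : ncl_congr x x.
Proof. unfold ncl_congr. rewrite gmul_Vl. apply gen_one. Qed.

Lemma ncl_congr_g1 : ncl_congr g gone.
Proof. apply gen_base. exists gone. gnorm. reflexivity. Qed.

Lemma ncl_congr_sym x y : ncl_congr x y -> ncl_congr y x.
Proof. intro Hxy. eapply gen_eq; [apply gen_inv, Hxy|]. gnorm. reflexivity. Qed.

Lemma ncl_congr_trans x y z : ncl_congr x y -> ncl_congr y z -> ncl_congr x z.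
Proof.
  intros Hxy Hyz. eapply gen_eq; [apply gen_mul; [exact Hyz | exact Hxy]|].
  gnorm. reflexivity.
Qed.

Lemma ncl_congr_mul x y x' y' :
  ncl_congr x y -> ncl_congr x' y' -> ncl_congr (gmul x x') (gmul y y').
Proof.
  intros Hxy Hxy'.
  eapply gen_eq; [apply gen_mul; [apply (normal_closure_conj _ y' Hxy) | exact Hxy']|].
  gnorm. reflexivity.
Qed.

Lemma ncl_congr_inv x y : ncl_congr x y -> ncl_congr (ginv x) (ginv y).
Proof.
  intro Hxy. eapply gen_eq; [apply (normal_closure_conj _ (ginv y) (gen_inv _ _ Hxy))|].
  gnorm. reflexivity.
Qed.

End NormalClosure.

Arguments ncl_congr {K} g x y.

Section ExponentSum.
Variables (K : Group) (g gam : K).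
Hypothesis K_gen : generated_by2 g gam.
Hypothesis gam_pow_ncl : forall n : Z, n <> 0%Z -> ~ normal_closure g (gzpow gam n).

Lemma ncl_congr_gzpow_exists x : exists n, ncl_congr g x (gzpow gam n).
Proof.
  induction (K_gen x) as [y [-> | ->]| |y z _ [n Hn] _ [m Hm]|y _ [n Hn]].
  - exists 0%Z. apply ncl_congr_g1.
  - exists 1%Z. rewrite gzpow1. apply ncl_congr_refl.
  - exists 0%Z. apply ncl_congr_refl.
  - exists (n + m)%Z. rewrite gzpow_add. apply ncl_congr_mul; assumption.
  - exists (- n)%Z. rewrite gzpow_opp. apply ncl_congr_inv; assumption.
Qed.

Lemma ncl_congr_gzpow_unique x n m :
  ncl_congr g x (gzpow gam n) -> ncl_congr g x (gzpow gam m) -> n = m.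
Proof.
  intros Hn Hm.
  assert (H : normal_closure g (gzpow gam (- n + m))).
  { rewrite gzpow_add, gzpow_opp. apply (ncl_congr_trans K g _ x);
      [apply ncl_congr_sym|]; assumption. }
  destruct (Z.eq_dec (- n + m) 0) as [E|E]; [lia|].
  exfalso. exact (gam_pow_ncl _ E H).
Qed.

Lemma exists_exponent_sum : exists pi : K -> Z,
  (forall x y, pi (gmul x y) = (pi x + pi y)%Z) /\ pi g = 0%Z /\ pi gam = 1%Z.
Proof.
  destruct (choice _ ncl_congr_gzpow_exists) as [pi Hpi].
  exists pi. repeat split.
  - intros x y. apply (ncl_congr_gzpow_unique (gmul x y)); [apply Hpi|].
    rewrite gzpow_add. apply ncl_congr_mul; apply Hpi.
  - apply (ncl_congr_gzpow_unique g); [apply Hpi | apply ncl_congr_g1].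
  - apply (ncl_congr_gzpow_unique gam); [apply Hpi|]. rewrite gzpow1. apply ncl_congr_refl.
Qed.

Lemma exists_hom_killing_g (H : Group) (h : H) :
  exists f : K -> H, is_hom f /\ f g = gone /\ f gam = h.
Proof.
  destruct exists_exponent_sum as (pi & pi_add & pi_g & pi_gam).
  exists (fun x => gzpow h (pi x)). repeat split.
  - intros x y. rewrite pi_add. apply gzpow_add.
  - rewrite pi_g. reflexivity.
  - rewrite pi_gam. apply gzpow1.
Qed.

End ExponentSum.

Section DirectProduct.
Variables G H : Group.

Definition pmul (p q : G * H) : G * H := (gmul (fst p) (fst q), gmul (snd p) (snd q)).
Definition pinv (p : G * H) : G * H := (ginv (fst p), ginv (snd p)).

Lemma pmul_assoc x y z : pmul x (pmul y z) = pmul (pmul x y) z.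
Proof. destruct x, y, z. unfold pmul; simpl. rewrite !gmul_assoc. reflexivity. Qed.
Lemma pmul_1l x : pmul (gone, gone) x = x.
Proof. destruct x. unfold pmul; simpl. rewrite !gmul_1l. reflexivity. Qed.
Lemma pmul_1r x : pmul x (gone, gone) = x.
Proof. destruct x. unfold pmul; simpl. rewrite !gmul_1r. reflexivity. Qed.
Lemma pmul_Vl x : pmul (pinv x) x = (gone, gone).
Proof. destruct x. unfold pmul; simpl. rewrite !gmul_Vl. reflexivity. Qed.
Lemma pmul_Vr x : pmul x (pinv x) = (gone, gone).
Proof. destruct x. unfold pmul; simpl. rewrite !gmul_Vr. reflexivity. Qed.

Definition Prod : Group :=
  {| carrier := (G * H)%type; gmul := pmul; gone := (gone, gone); ginv := pinv;
     gmul_assoc := pmul_assoc; gmul_1l := pmul_1l; gmul_1r := pmul_1r;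
     gmul_Vl := pmul_Vl; gmul_Vr := pmul_Vr |}.

Lemma gpow_pair (x : G) (y : H) n : @gpow Prod (x, y) n = (gpow x n, gpow y n).
Proof. induction n as [|n IH]; simpl; [|rewrite IH]; reflexivity. Qed.

Lemma comm_pair (x y : G) (u v : H) :
  @comm Prod (x, u) (y, v) = (comm x y, comm u v).
Proof. reflexivity. Qed.

Lemma pair_commute (x : G) (u : H) :
  @gmul Prod (gone, u) (x, gone) = @gmul Prod (x, gone) (gone, u).
Proof. cbn. unfold pmul; simpl. rewrite !gmul_1l, !gmul_1r. reflexivity. Qed.

Lemma prod_torsion_free : torsion_free G -> torsion_free H -> torsion_free Prod.
Proof.
  intros tfG tfH [x y] n n_pos E. rewrite gpow_pair in E. injection E as Ex Ey.
  rewrite (tfG x n n_pos Ex), (tfH y n n_pos Ey). reflexivity.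
Qed.

Lemma prod_finitely_generated :
  finitely_generated G -> finitely_generated H -> finitely_generated Prod.
Proof.
  intros [lG HlG] [lH HlH].
  assert (inl_hom : @is_hom G Prod (fun x => (x, gone))).
  { intros u v. cbn. unfold pmul; simpl. rewrite gmul_1l. reflexivity. }
  assert (inr_hom : @is_hom H Prod (fun y => (gone, y))).
  { intros u v. cbn. unfold pmul; simpl. rewrite gmul_1l. reflexivity. }
  exists (map (fun x => (x, gone)) lG ++ map (fun y => (gone, y)) lH). intros [x y].
  apply (gen_eq Prod _ (@gmul Prod (x, gone) (gone, y))).
  - apply gen_mul.
    + apply (gen_hom _ _ _ inl_hom (fun u => In u lG)); [|apply HlG].
      intros u Hu. apply in_or_app. left. exact (in_map (fun x : G => (x, gone)) _ _ Hu).
    + apply (gen_hom _ _ _ inr_hom (fun u => In u lH)); [|apply HlH].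
      intros u Hu. apply in_or_app. right. exact (in_map (fun y : H => (gone, y)) _ _ Hu).
  - cbn. unfold pmul; simpl. rewrite gmul_1l, gmul_1r. reflexivity.
Qed.

Lemma graph_hom (f : G -> H) : is_hom f -> @is_hom G Prod (fun x => (x, f x)).
Proof. intros f_hom x y. cbn. unfold pmul; simpl. rewrite f_hom. reflexivity. Qed.

Lemma graph_injective (f : G -> H) : injective (fun x => (x, f x) : Prod).
Proof. intros x y E. injection E as E. exact E. Qed.

End DirectProduct.

(* (a, b, c) encodes the unitriangular matrix [[1, a, c], [0, 1, b], [0, 0, 1]]. *)
Definition hmul (p q : Z * Z * Z) : Z * Z * Z :=
  let '(a, b, c) := p in let '(a', b', c') := q in (a + a', b + b', c + c' + a * b')%Z.
Definition hinv (p : Z * Z * Z) : Z * Z * Z :=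
  let '(a, b, c) := p in (- a, - b, - c + a * b)%Z.

Lemma triple_eq (a b c a' b' c' : Z) :
  a = a' -> b = b' -> c = c' -> (a, b, c) = (a', b', c').
Proof. intros -> -> ->. reflexivity. Qed.

Lemma hmul_assoc x y z : hmul x (hmul y z) = hmul (hmul x y) z.
Proof. destruct x as [[] ], y as [[] ], z as [[] ]. apply triple_eq; ring. Qed.
Lemma hmul_1l x : hmul (0, 0, 0)%Z x = x.
Proof. destruct x as [[] ]. apply triple_eq; ring. Qed.
Lemma hmul_1r x : hmul x (0, 0, 0)%Z = x.
Proof. destruct x as [[] ]. apply triple_eq; ring. Qed.
Lemma hmul_Vl x : hmul (hinv x) x = (0, 0, 0)%Z.
Proof. destruct x as [[] ]. apply triple_eq; ring. Qed.
Lemma hmul_Vr x : hmul x (hinv x) = (0, 0, 0)%Z.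
Proof. destruct x as [[] ]. apply triple_eq; ring. Qed.

Definition Heis : Group :=
  {| carrier := (Z * Z * Z)%type; gmul := hmul; gone := (0, 0, 0)%Z; ginv := hinv;
     gmul_assoc := hmul_assoc; gmul_1l := hmul_1l; gmul_1r := hmul_1r;
     gmul_Vl := hmul_Vl; gmul_Vr := hmul_Vr |}.

Lemma heis_mulE a b c a' b' c' :
  @gmul Heis (a, b, c) (a', b', c') = (a + a', b + b', c + c' + a * b')%Z.
Proof. reflexivity. Qed.

Definition hx : Heis := (1, 0, 0)%Z.
Definition hy : Heis := (0, 1, 0)%Z.

Lemma comm_hx_hy : comm hx hy = (0, 0, 1)%Z.
Proof. reflexivity. Qed.

Lemma comm_hy_hx : comm hy hx = (0, 0, -1)%Z.
Proof. reflexivity. Qed.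

Lemma gzpow_hx n : gzpow hx n = (n, 0, 0)%Z.
Proof.
  apply (gzpow_eq Heis hx (fun n => (n, 0, 0)%Z)); [reflexivity|].
  intro m. unfold hx. rewrite heis_mulE. apply triple_eq; lia.
Qed.

Lemma gzpow_hy n : gzpow hy n = (0, n, 0)%Z.
Proof.
  apply (gzpow_eq Heis hy (fun n => (0, n, 0)%Z)); [reflexivity|].
  intro m. unfold hy. rewrite heis_mulE. apply triple_eq; lia.
Qed.

Lemma gzpow_comm_hx_hy n : gzpow (comm hx hy) n = (0, 0, n)%Z.
Proof.
  rewrite comm_hx_hy. apply (gzpow_eq Heis _ (fun n => (0, 0, n)%Z)); [reflexivity|]. intro m. rewrite heis_mulE. apply triple_eq; lia.
Qed.

Lemma heis_generated_by2 : generated_by2 hx hy.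
Proof.
  intros [[a b] c]. set (S := fun y : Heis => y = hx \/ y = hy).
  assert (Sx : gen S hx) by (apply gen_base; left; reflexivity).
  assert (Sy : gen S hy) by (apply gen_base; right; reflexivity).
  apply (gen_eq Heis S (gmul (gmul (gzpow hx a) (gzpow hy b))
                             (gzpow (comm hx hy) (c - a * b)))).
  - repeat apply gen_mul; apply gen_gzpow; auto using gen_comm.
  - rewrite gzpow_hx, gzpow_hy, gzpow_comm_hx_hy, !heis_mulE. apply triple_eq; lia.
Qed.

Lemma gpow_heis a b c n :
  exists z, @gpow Heis (a, b, c) n = (Z.of_nat n * a, Z.of_nat n * b, z)%Z.
Proof.
  induction n as [|n [z IH]].
  - exists 0%Z. reflexivity.
  - cbn [gpow]. rewrite IH, Nat2Z.inj_succ. eexists. rewrite heis_mulE. apply triple_eq; [lia|lia|reflexivity].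
Qed.

Lemma gpow_heis_center c n : @gpow Heis (0, 0, c)%Z n = (0, 0, Z.of_nat n * c)%Z.
Proof.
  induction n as [|n IH].
  - reflexivity.
  - cbn [gpow]. rewrite IH, Nat2Z.inj_succ, heis_mulE. apply triple_eq; lia.
Qed.

Lemma heis_torsion_free : torsion_free Heis.
Proof.
  intros [[a b] c] n n_pos E.
  destruct (gpow_heis a b c n) as [z Ez]. rewrite Ez in E. injection E as Ea Eb Ez0.
  assert (a = 0%Z) by nia. assert (b = 0%Z) by nia. subst a b.
  rewrite gpow_heis_center in Ez. injection Ez as _ Ec.
  apply triple_eq; nia.
Qed.

Theorem lemma3p2 (K : Group) (g gam : K) :
  generated_by2 g gam ->
  nontrivial K ->
  torsion_free K ->
  (forall n : Z, n <> 0%Z -> ~ normal_closure g (gzpow gam n)) ->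
  exists (Gam : Group) (phi : K -> Gam) (a : Gam),
    finitely_generated Gam /\ torsion_free Gam /\
    a <> gone /\
    is_hom phi /\ injective phi /\
    comm a (phi gam) <> gone /\
    gmul (comm a (phi gam)) (phi g) = gmul (phi g) (comm a (phi gam)) /\
    comm a (phi g) = gone.
Proof.
  intros K_gen _ K_tf gam_pow_ncl.
  destruct (exists_hom_killing_g K g gam K_gen gam_pow_ncl Heis hx) as (f & f_hom & fg & fgam).
  exists (Prod K Heis), (fun x => (x, f x)), (gone, hy). rewrite fg, fgam.
  repeat split.
  - apply prod_finitely_generated; eapply generated_by2_finitely_generated;
      [exact K_gen | exact heis_generated_by2].
  - apply prod_torsion_free; [exact K_tf | exact heis_torsion_free].
  - discriminate.
  - apply graph_hom, f_hom.
  - apply graph_injective.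
  - rewrite comm_pair, comm_hy_hx. discriminate.
  - rewrite comm_pair, comm1g. apply pair_commute.
  - rewrite comm_pair, comm1g, commg1. reflexivity.
Qed.
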